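(* At every moment during the execution of Greedy Dual on any MPMD or MBPMD instance, the following hold. (i) Every active set $S$ contains exactly $\mathrm{sur}(S)$ free (unmatched) requests. (ii) The family of all sets that are active or inactive at that moment is laminar.
   Context: Problem (MPMD / MBPMD). Let $(\mathcal{X},\mathrm{dist})$ be a metric space. An instance consists of $2m$ requests $u_1,\dots,u_{2m}$. Each request $u$ is a triple $(\mathrm{pos}(u),\mathrm{atime}(u),\mathrm{sgn}(u))$, where $\mathrm{pos}(u)\in\mathcal{X}$ is its location and $\mathrm{atime}(u)\ge0$ is its arrival time, with arrival times nondecreasing. In MPMD, $\mathrm{sgn}(u)=0$ for all requests. In MBPMD, exactly $m$ requests have sign $+1$ and $m$ have sign $-1$. At time $\tau$, an algorithm may match two arrived, unmatched requests $u,v$ with $\mathrm{sgn}(u)=-\mathrm{sgn}(v)$, at cost $\mathrm{dist}(\mathrm{pos}(u),\mathrm{pos}(v))$ (connection cost) plus $(\tau-\mathrm{atime}(u))+(\tau-\mathrm{atime}(v))$ (waiting costs). All requests must eventually be matched. Notation. Edges are unordered pairs $\{u,v\}$ of distinct requests with $\mathrm{sgn}(u)=-\mathrm{sgn}(v)$. For a set $S$ of requests, $\delta(S)$ is the set of edges with exactly one endpoint in $S$. In MPMD, $\mathrm{sur}(S)=|S|\bmod 2$; in MBPMD, $\mathrm{sur}(S)=|\sum_{u\in S}\mathrm{sgn}(u)|$. For an edge $e=(u,v)$, $\mathrm{cost}(e)=\mathrm{dist}(\mathrm{pos}(u),\mathrm{pos}(v))+|\mathrm{atime}(u)-\mathrm{atime}(v)|$.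 Algorithm Greedy Dual (GD). GD maintains a dual variable $y_S\ge0$ for every set $S$ of already-arrived requests; $y_S(\tau)$ denotes its value at time $\tau$. It also maintains a partition of the arrived requests into active sets, with $\mathcal{A}(u)$ denoting the active set containing $u$. An active set is growing if it contains at least one free request, and non-growing otherwise. - When a request $u$ arrives, $\mathcal{A}(u)\leftarrow\{u\}$ becomes a new active set, and $y_S\leftarrow 0$ for every new set $S$ containing $u$. - Tight-constraint event: while there is an edge $e=(u,v)$ between arrived requests with $\mathcal{A}(u)\neq\mathcal{A}(v)$ and $\sum_{S:\,e\in\delta(S)}y_S=\mathrm{cost}(e)$, GD does the following. It merges the two sets: $S=\mathcal{A}(u)\cup\mathcal{A}(v)$ becomes active and $\mathcal{A}(w)\leftarrow S$ for all $w\in S$, while $\mathcal{A}(u)$ and $\mathcal{A}(v)$ become inactive. It marks the edge $e$. Then, while there are free $u',v'\in S$ with $\mathrm{sgn}(u')=-\mathrm{sgn}(v')$, it matches $u'$ with $v'$ at the current time. - At all other times, $y_S$ increases continuously at rate $1$ (the same rate as time) for every active growing set $S$; all other dual variables stay constant. *)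

(* Model of the Greedy Dual (GD) algorithm for MPMD / MBPMD
   as a nondeterministic transition system; reachable states = all moments of
   any execution of GD (all tie-breaking choices allowed). *)
From HB Require Import structures.
From mathcomp Require Import all_boot all_order all_algebra.
Set Implicit Arguments. Unset Strict Implicit. Unset Printing Implicit Defensive.
Import Order.TTheory GRing.Theory Num.Theory.
Local Open Scope ring_scope.

Record metric (R : realFieldType) (X : Type) := Metric {
  dist : X -> X -> R;
  dist_self : forall x, dist x x = 0;
  dist_eq0 : forall x y, dist x y = 0 -> x = y;
  dist_sym : forall x y, dist x y = dist y x;
  dist_tri : forall x y z, dist x z <= dist x y + dist y z }.

(* An instance with 2m requests, indexed 'I_(2m) in arrival order. *)
Record instance (R : realFieldType) (X : Type) (m : nat) := Instance {
  pos : 'I_(2 * m) -> X;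
  atime : 'I_(2 * m) -> R;
  sgn : 'I_(2 * m) -> int }.

Section GD.
Variables (R : realFieldType) (X : Type) (m : nat).
Variables (M : metric R X) (I : instance R X m).
Local Notation Req := ('I_(2 * m)).

(* bip = false : MPMD;  bip = true : MBPMD *)
Definition valid_instance (bip : bool) : Prop :=
  (forall i, 0 <= atime I i) /\
  (forall i j : Req, (i <= j)%N -> atime I i <= atime I j) /\
  (if bip then
     (forall i, sgn I i = 1 \/ sgn I i = -1) /\
     #|[set i | sgn I i == 1]| = m /\ #|[set i | sgn I i == -1]| = m
   else forall i, sgn I i = 0).

Definition sur (bip : bool) (S : {set Req}) : nat :=
  if bip then absz (\sum_(u in S) sgn I u)%R else (#|S| %% 2)%N.

Definition is_edge (u v : Req) : bool := (u != v) && (sgn I u == - sgn I v).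

Definition cost (u v : Req) : R :=
  dist M (pos I u) (pos I v) + `|atime I u - atime I v|.

Definition crossing (y : {set Req} -> R) (u v : Req) : R :=
  \sum_(S : {set Req} | (u \in S) != (v \in S)) y S.

Record gd_state := GDState {
  st_now : R;
  st_arrived : {set Req};
  st_free : {set Req};
  st_active : {set {set Req}};
  st_inactive : {set {set Req}};
  st_dual : {set Req} -> R }.

Definition init_state : gd_state :=
  GDState 0 set0 set0 set0 set0 (fun _ => 0).

Definition growing (s : gd_state) (S : {set Req}) : bool :=
  (S \in st_active s) && (S :&: st_free s != set0).

Definition dual_at (s : gd_state) (t : R) (S : {set Req}) : R :=
  st_dual s S + (if growing s S then t - st_now s else 0).

(* free set after greedily matching inside S: F' is the result of repeatedly
   matching free opposite-sign pairs in S until none remain *)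
Definition greedy_match_result (F F' S : {set Req}) : Prop :=
  F' \subset F /\ F :\: F' \subset S /\
  (exists p : Req -> Req, forall x, x \in F :\: F' ->
     [/\ p x \in F :\: F', p x != x, p (p x) = x & sgn I (p x) = - sgn I x]) /\
  (forall w1 w2, w1 \in S :&: F' -> w2 \in S :&: F' -> ~~ is_edge w1 w2).

Inductive gd_step : gd_state -> gd_state -> Prop :=
| step_arrive s u :
    u \notin st_arrived s ->
    (forall v : Req, (v < u)%N -> v \in st_arrived s) ->
    atime I u = st_now s ->
    gd_step s (GDState (st_now s) (u |: st_arrived s) (u |: st_free s)
                 ([set u] |: st_active s) (st_inactive s)
                 (fun S => if (u \in S) && (S \subset u |: st_arrived s)
                           then 0 else st_dual s S))
| step_tight s u v S1 S2 F' :
    u \in st_arrived s -> v \in st_arrived s -> is_edge u v ->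
    S1 \in st_active s -> S2 \in st_active s -> S1 != S2 ->
    u \in S1 -> v \in S2 ->
    crossing (st_dual s) u v = cost u v ->
    greedy_match_result (st_free s) F' (S1 :|: S2) ->
    gd_step s (GDState (st_now s) (st_arrived s) F'
                 ((S1 :|: S2) |: ((st_active s :\ S1) :\ S2))
                 (S1 |: (S2 |: st_inactive s)) (st_dual s))
| step_time s t :
    st_now s < t ->
    (forall v, v \notin st_arrived s -> t <= atime I v) ->
    (forall u v S1 S2, u \in st_arrived s -> v \in st_arrived s -> is_edge u v ->
       S1 \in st_active s -> S2 \in st_active s -> S1 != S2 -> u \in S1 -> v \in S2 ->
       crossing (st_dual s) u v != cost u v) ->
    (* duals of active growing sets grow at rate 1 while staying feasible *)
    (forall tau u v S1 S2, st_now s < tau <= t ->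
       u \in st_arrived s -> v \in st_arrived s -> is_edge u v ->
       S1 \in st_active s -> S2 \in st_active s -> S1 != S2 -> u \in S1 -> v \in S2 ->
       crossing (dual_at s tau) u v <= cost u v) ->
    gd_step s (GDState t (st_arrived s) (st_free s) (st_active s) (st_inactive s)
                 (dual_at s t)).

Inductive reachable : gd_state -> Prop :=
| reach_init : reachable init_state
| reach_step s s' : reachable s -> gd_step s s' -> reachable s'.

End GD.

Definition laminar (T : finType) (F : {set {set T}}) : Prop :=
  forall A B, A \in F -> B \in F ->
    A \subset B \/ B \subset A \/ [disjoint A & B].

From HB Require Import structures.
From mathcomp Require Import all_boot all_order all_algebra.
From mathcomp Require Import zify.
Set Implicit Arguments. Unset Strict Implicit. Unset Printing Implicit Defensive.
Import Order.TTheory GRing.Theory Num.Theory.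

(* The requests of an active set that GD has already matched are matched among
   themselves, because GD only matches inside the set created by a merge.  So
   the matched part of an active set S carries a fixed-point-free involution
   reversing signs: it has even size and total sign 0, and sur(S) only depends
   on the free part of S.  The free part contains no edge, since GD matches
   greedily after every merge: in MPMD it has at most one request, in MBPMD
   all its requests have the same sign, and in both cases its size is sur(S).
   Laminarity holds because every new set is a fresh singleton or the union of
   two active sets, and every set ever created lies inside an active set or is
   disjoint from it. *)

Section OppositePairing.
Variables (T : finType) (V : numDomainType) (g : T -> V).

Definition opposite_pairing (D : {set T}) (p : T -> T) :=
  forall x, x \in D -> [/\ p x \in D, p x != x, p (p x) = x & g (p x) = - g x]%R.

Lemma opposite_pairingU (D1 D2 : {set T}) (p1 p2 : T -> T) :
  [disjoint D1 & D2] -> opposite_pairing D1 p1 -> opposite_pairing D2 p2 ->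
  opposite_pairing (D1 :|: D2) (fun x => if x \in D1 then p1 x else p2 x).
Proof.
move=> D12 pD1 pD2 x; rewrite in_setU.
case: (boolP (x \in D1)) => [xD1 _ | xD1 /= xD2].
  by have [p1D1 ? -> ?] := pD1 x xD1; rewrite p1D1 in_setU p1D1.
have [p2D2 ? -> ?] := pD2 x xD2.
by rewrite (disjointFl D12 p2D2) in_setU p2D2 orbT.
Qed.

Variables (D : {set T}) (p : T -> T).
Hypothesis pD : opposite_pairing D p.

Let q x := if x \in D then p x else x.

Let q_in x : (q x \in D) = (x \in D).
Proof.
by rewrite /q; case: (boolP (x \in D)) => [xD | /negbTE -> //]; case: (pD xD).
Qed.

Let qK : involutive q.
Proof.
move=> x; rewrite /q; case: (boolP (x \in D)) => [xD | /negbTE -> //].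
by case: (pD xD) => -> _ ->.
Qed.

Let big_q (W : Type) (idx : W) (op : Monoid.com_law idx) (h : T -> W) :
  \big[op/idx]_(x in D) h (q x) = \big[op/idx]_(x in D) h x.
Proof.
by rewrite [RHS](reindex_inj (inv_inj qK)); apply: eq_bigl => x; rewrite q_in.
Qed.

Lemma opposite_pairing_sum_eq0 : (\sum_(x in D) g x = 0)%R.
Proof.
have : ((\sum_(x in D) g x) *+ 2 = 0)%R.
  rewrite mulr2n -{1}(big_q +%R) -big_split /= big1 // => x xD.
  by have [_ _ _ gN] := pD xD; rewrite /q xD gN addNr.
by move/eqP; rewrite mulrn_eq0 => /eqP.
Qed.

Lemma opposite_pairing_card_even : ~~ odd #|D|.
Proof.
pose below (x y : T) := (enum_rank x < enum_rank y)%N.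
have splitD : #|D| = (\sum_(x in D) below x (q x) + \sum_(x in D) below (q x) x)%N.
  rewrite -sum1_card -big_split /=; apply: eq_bigr => x xD.
  have [_ qx_neq _ _] := pD xD; rewrite /below /q xD.
  have : (enum_rank (p x) : nat) != enum_rank x.
    by rewrite val_eqE (inj_eq enum_rank_inj).
  by case: ltngtP.
rewrite splitD.
have -> : (\sum_(x in D) below (q x) x = \sum_(x in D) below x (q x))%N.
  have /= <- := big_q addn (fun x => below (q x) x).
  by apply: eq_bigr => x _; rewrite qK.
by rewrite addnn odd_double.
Qed.

End OppositePairing.

Lemma disjointsU (T : finType) (A B C : {set T}) :
  [disjoint A & B] -> [disjoint A & C] -> [disjoint A & B :|: C].
Proof.
move=> AB AC.
by rewrite -setI_eq0 setIUr (disjoint_setI0 AB) (disjoint_setI0 AC) setU0.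
Qed.

Lemma laminarU1 (T : finType) (A : {set T}) (F : {set {set T}}) :
  laminar F -> (forall B, B \in F -> B \subset A \/ [disjoint B & A]) ->
  laminar (A |: F).
Proof.
move=> lamF nestA B C /setU1P[-> | BF] /setU1P[-> | CF]; first by left.
- case: (nestA C CF) => [CA | ?]; first by right; left.
  by rewrite disjoint_sym; right; right.
- by case: (nestA B BF) => [BA | ?]; [left | right; right].
- exact: lamF.
Qed.

Section GreedyDual.
Variables (R : realFieldType) (X : Type) (m : nat) (I : instance R X m).
Local Notation Req := 'I_(2 * m).
Local Notation state := (gd_state R m).

Definition gd_family (s : state) := st_active s :|: st_inactive s.

Record gd_invariant (s : state) : Prop := GDInvariant {
  family_sub_arrived : forall S, S \in gd_family s -> S \subset st_arrived s;
  active_disjoint : forall S T, S \in st_active s -> T \in st_active s -> S != T ->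
    [disjoint S & T];
  family_nested_active : forall B S, B \in gd_family s -> S \in st_active s ->
    B \subset S \/ [disjoint B & S];
  family_laminar : laminar (gd_family s);
  active_matched_paired : forall S, S \in st_active s ->
    exists p, opposite_pairing (sgn I) (S :\: st_free s) p;
  active_free_edgeless : forall S, S \in st_active s ->
    {in S :&: st_free s &, forall u v, ~~ is_edge I u v} }.

Lemma gd_invariant_init : gd_invariant (init_state R m).
Proof. by split=> [S | S | B S | B | S | S]; rewrite ?inE //= setU0 inE. Qed.

Lemma edgeless_sgn_eq (u v : Req) :
  (forall w, sgn I w = 1 \/ sgn I w = -1)%R ->
  u != v -> ~~ is_edge I u v -> sgn I u = sgn I v.
Proof.
by move=> sgn_pm; rewrite /is_edge => ->; case: (sgn_pm u) (sgn_pm v) => -> [] ->.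
Qed.

Lemma edgeless_card_eq_sur (bip : bool) (S F : {set Req}) (p : Req -> Req) :
  valid_instance I bip -> opposite_pairing (sgn I) (S :\: F) p ->
  {in S :&: F &, forall u v, ~~ is_edge I u v} -> #|S :&: F| = sur I bip S.
Proof.
case=> _ [_ sgnI] pM edgeless; rewrite /sur; case: bip sgnI => [[sgn_pm _] | sgn0].
  rewrite (big_setID F) /= (opposite_pairing_sum_eq0 pM) addr0.
  have [-> | [w wSF]] := set_0Vmem (S :&: F); first by rewrite big_set0 cards0.
  rewrite (eq_bigr (fun=> sgn I w)) => [|u uSF]; last first.
    have [-> // | uw] := eqVneq u w.
    exact: edgeless_sgn_eq sgn_pm uw (edgeless u w uSF wSF).
  by rewrite sumr_const; case: (sgn_pm w) => ->; rewrite ?mulNrn ?abszN natz.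
have free_le1 : #|S :&: F| <= 1.
  apply/card_le1_eqP => u v uSF vSF; apply/eqP.
  apply: contraNT (edgeless v u vSF uSF).
  by rewrite /is_edge => ->; rewrite !sgn0 oppr0.
have matched_even : #|S :\: F| %% 2 = 0.
  by rewrite modn2 (negbTE (opposite_pairing_card_even pM)).
rewrite -(cardsID F S); lia.
Qed.

Section Arrival.
Variables (s : state) (u : Req) (d : {set Req} -> R).
Hypotheses (inv : gd_invariant s) (u_new : u \notin st_arrived s).

Local Notation s' := (GDState (st_now s) (u |: st_arrived s) (u |: st_free s)
                        ([set u] |: st_active s) (st_inactive s) d).

Let family_arrive : gd_family s' = [set u] |: gd_family s.
Proof. by rewrite /gd_family setUA. Qed.

Let u_notin_family B : B \in gd_family s -> [disjoint [set u] & B].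
Proof.
move=> BF; rewrite disjoints1; apply: contra u_new.
exact: subsetP (family_sub_arrived inv BF) u.
Qed.

Let active_in_family S : S \in st_active s -> S \in gd_family s.
Proof. by rewrite inE => ->. Qed.

Let old_active_free S : S \in st_active s ->
  S :\: (u |: st_free s) = S :\: st_free s /\ S :&: (u |: st_free s) = S :&: st_free s.
Proof.
move=> SA; have uS := disjointFr (u_notin_family (active_in_family SA)) (set11 u).
by split; apply/setP => x; rewrite !inE; case: (x =P u) => [->|]; rewrite ?uS ?andbF.
Qed.

Lemma gd_invariant_arrive : gd_invariant s'.
Proof.
split=> /=.
- move=> S; rewrite family_arrive => /setU1P[-> | SF]; first by rewrite sub1set setU11.
  exact: subset_trans (family_sub_arrived inv SF) (subsetUr _ _).
- move=> S T /setU1P[-> | SA] /setU1P[-> | TA]; rewrite ?eqxx //;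
    last exact: (active_disjoint inv).
  + by move=> _; apply/u_notin_family/active_in_family.
  + by move=> _; rewrite disjoint_sym; apply/u_notin_family/active_in_family.
- move=> B S; rewrite family_arrive => /setU1P[-> | BF] /setU1P[-> | SA]; first by left.
  + by right; apply/u_notin_family/active_in_family.
  + by right; rewrite disjoint_sym; apply: u_notin_family.
  + exact: (family_nested_active inv).
- rewrite family_arrive; apply: laminarU1 (family_laminar inv) _ => B BF.
  by right; rewrite disjoint_sym; apply: u_notin_family.
- move=> S /setU1P[-> | SA]; last first.
    by have [-> _] := old_active_free SA; exact: (active_matched_paired inv).
  by exists id => x; rewrite !inE; case: eqP; rewrite ?andbF.
- move=> S /setU1P[-> | SA]; last first.
    by have [_ ->] := old_active_free SA; exact: (active_free_edgeless inv).
  by move=> v w; rewrite !inE => /andP[/eqP-> _] /andP[/eqP-> _]; rewrite /is_edge eqxx.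
Qed.

End Arrival.

Section Merge.
Variables (s : state) (S1 S2 F' : {set Req}).
Hypotheses (inv : gd_invariant s) (S1A : S1 \in st_active s).
Hypotheses (S2A : S2 \in st_active s) (S12 : S1 != S2).
Hypothesis greedy : greedy_match_result I (st_free s) F' (S1 :|: S2).

Local Notation S := (S1 :|: S2).
Local Notation F := (st_free s).
Local Notation s' := (GDState (st_now s) (st_arrived s) F'
                        (S |: ((st_active s :\ S1) :\ S2))
                        (S1 |: (S2 |: st_inactive s)) (st_dual s)).

Let F'F : F' \subset F. Proof. by case: greedy. Qed.
Let FF'S : F :\: F' \subset S. Proof. by case: greedy => _ []. Qed.

Let family_merge : gd_family s' = S |: gd_family s.
Proof.
apply/setP => T; rewrite /gd_family !inE.
case: (T =P S1) => [-> | _]; first by rewrite S1A /= !orbT.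
by case: (T =P S2) => [-> | _]; rewrite ?S2A /= ?orbT -?orbA.
Qed.

Let active_merge T :
  T \in st_active s' -> T = S \/ [/\ T \in st_active s, T != S1 & T != S2].
Proof. by rewrite !inE => /orP[/eqP | /and3P[TS2 TS1 TA]]; [left | right]. Qed.

Let other_active_disjoint T :
  T \in st_active s -> T != S1 -> T != S2 -> [disjoint T & S].
Proof. by move=> TA TS1 TS2; apply: disjointsU; apply: (active_disjoint inv). Qed.

Let family_nested_merged B : B \in gd_family s -> B \subset S \/ [disjoint B & S].
Proof.
move=> BF; case: (family_nested_active inv BF S1A) => [BS1 | BS1].
  by left; apply: subset_trans BS1 (subsetUl _ _).
case: (family_nested_active inv BF S2A) => [BS2 | BS2].
  by left; apply: subset_trans BS2 (subsetUr _ _).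
by right; apply: disjointsU.
Qed.

Let other_active_free (T : {set Req}) : [disjoint T & S] ->
  T :\: F' = T :\: F /\ T :&: F' = T :&: F.
Proof.
move=> TS; suff F'E x : x \in T -> (x \in F') = (x \in F).
  by split; apply/setP => x; rewrite !inE;
    case: (boolP (x \in T)) => xT; rewrite ?andbF ?andbT //= F'E.
move=> xT; apply/idP/idP => [/(subsetP F'F) // | xF]; apply: contraFT (disjointFr TS xT).
by move=> xF'; apply: (subsetP FF'S); rewrite inE xF xF'.
Qed.

Let merged_matched : S :\: F' = (S1 :\: F :|: S2 :\: F) :|: (F :\: F').
Proof.
rewrite -setDUl; apply/setP => x; rewrite !inE.
have := subsetP F'F x; have := subsetP FF'S x; rewrite !inE.
by case: (x \in F'); case: (x \in F); case: (x \in S1); case: (x \in S2); auto.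
Qed.

Let merged_matched_paired : exists p, opposite_pairing (sgn I) (S :\: F') p.
Proof.
have [p1 pM1] := active_matched_paired inv S1A.
have [p2 pM2] := active_matched_paired inv S2A.
have [_ [_ [[p pM] _]]] := greedy.
have d12 : [disjoint S1 :\: F & S2 :\: F].
  exact: disjointW (subsetDl _ _) (subsetDl _ _) (active_disjoint inv S1A S2A S12).
have dF : [disjoint S1 :\: F :|: S2 :\: F & F :\: F'].
  rewrite -setDUl; apply: disjointWr (subsetDl _ _) _.
  by rewrite disjoints_subset subsetDr.
rewrite merged_matched; eexists.
exact: opposite_pairingU dF (opposite_pairingU d12 pM1 pM2) pM.
Qed.

Lemma gd_invariant_merge : gd_invariant s'.
Proof.
split=> /=.
- move=> T; rewrite family_merge => /setU1P[-> | TF];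
    last exact: (family_sub_arrived inv).
  by rewrite subUset !(family_sub_arrived inv) // inE ?S1A ?S2A.
- move=> T U /active_merge[-> | [TA TS1 TS2]] /active_merge[-> | [UA US1 US2]];
    rewrite ?eqxx //; last exact: (active_disjoint inv).
  + by move=> _; rewrite disjoint_sym; apply: other_active_disjoint.
  + by move=> _; apply: other_active_disjoint.
- move=> B T; rewrite family_merge => /setU1P[-> | BF] /active_merge[-> | [TA TS1 TS2]].
  + by left.
  + by right; rewrite disjoint_sym; apply: other_active_disjoint.
  + exact: family_nested_merged.
  + exact: (family_nested_active inv).
- by rewrite family_merge; apply: laminarU1 (family_laminar inv) family_nested_merged.
- move=> T /active_merge[-> | [TA TS1 TS2]]; first exact: merged_matched_paired.
  have [-> _] := other_active_free (other_active_disjoint TA TS1 TS2).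
  exact: (active_matched_paired inv).
- move=> T /active_merge[-> | [TA TS1 TS2]]; first by case: greedy => _ [_ []].
  have [_ ->] := other_active_free (other_active_disjoint TA TS1 TS2).
  exact: (active_free_edgeless inv).
Qed.

End Merge.

Lemma gd_invariant_step (M : metric R X) (s s' : state) :
  gd_step M I s s' -> gd_invariant s -> gd_invariant s'.
Proof.
case=> [s0 u u_new _ _ | s0 u v S1 S2 F' _ _ _ S1A S2A S12 _ _ _ greedy | s0 t _ _ _ _]
  inv.
- exact: gd_invariant_arrive.
- exact: gd_invariant_merge.
- by case: inv; split.
Qed.

Lemma reachable_gd_invariant (M : metric R X) (s : state) :
  reachable M I s -> gd_invariant s.
Proof.
elim=> [| s0 s1 _ inv0 step]; first exact: gd_invariant_init.
exact: gd_invariant_step step inv0.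
Qed.

End GreedyDual.

Theorem mainTheorem2 (R : realFieldType) (X : Type) (m : nat)
  (M : metric R X) (I : instance R X m) (bip : bool) :
  valid_instance I bip ->
  forall s : gd_state R m, reachable M I s ->
    (forall S, S \in st_active s -> #|S :&: st_free s| = sur I bip S) /\
    laminar (st_active s :|: st_inactive s).
Proof.
move=> valid s /reachable_gd_invariant inv; split; last exact: family_laminar inv.
move=> S SA; have [p pM] := active_matched_paired inv SA.
exact: edgeless_card_eq_sur valid pM (active_free_edgeless inv SA).
Qed.
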